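(* Let $A,B\in\mathcal A_n$ with $A<B$ in ASM order. Then $\mathbf x^A-\mathbf x^B=L(x)\,M(x)$, where $L(x)=\prod_{i,j}x_{ij}^{c_{ij}}$ is a Laurent monomial with all $c_{ij}\ge-1$, and $M(x)$ is a polynomial with nonnegative coefficients and zero constant term in minors of $x$ of size $1$ or $2$ whose row indices are consecutive and whose column indices are consecutive.
   Context: $\mathcal A_n$ is the set of $n\times n$ alternating sign matrices (entries in $\{-1,0,1\}$, partial row and column sums in $\{0,1\}$, full row and column sums $1$). Corner sum matrix $\widetilde A(i,j)=\sum_{p\le i,q\le j}a_{pq}$; ASM order: $A\le B$ iff $\widetilde A(i,j)\ge\widetilde B(i,j)$ for all $i,j$, and $A<B$ means $A\le B$, $A\ne B$. $x=(x_{ij})$ is a matrix of commuting indeterminates, $\mathbf x^A=\prod_{i,j}x_{ij}^{a_{ij}}$. *)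

From HB Require Import structures.
From mathcomp Require Import all_boot all_order all_algebra.
Set Implicit Arguments. Unset Strict Implicit. Unset Printing Implicit Defensive.
Import Order.TTheory GRing.Theory Num.Theory.
Local Open Scope ring_scope.

Definition is_asm (n : nat) (A : 'M[int]_n) : Prop :=
  (forall i j, A i j \in [:: -1; 0; 1]) /\
  (forall i (k : 'I_n), \sum_(j < n | (j <= k)%N) A i j \in [:: 0; 1]) /\
  (forall j (k : 'I_n), \sum_(i < n | (i <= k)%N) A i j \in [:: 0; 1]) /\
  (forall i, \sum_(j < n) A i j = 1) /\
  (forall j, \sum_(i < n) A i j = 1).

Definition corner_sum (n : nat) (A : 'M[int]_n) (i j : 'I_n) : int :=
  \sum_(p < n | (p <= i)%N) \sum_(q < n | (q <= j)%N) A p q.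

Definition asm_le (n : nat) (A B : 'M[int]_n) : Prop :=
  forall i j, corner_sum B i j <= corner_sum A i j.

Definition asm_lt (n : nat) (A B : 'M[int]_n) : Prop := asm_le A B /\ A <> B.

Definition xmon (F : fieldType) (n : nat) (x : 'M[F]_n) (C : 'M[int]_n) : F :=
  \prod_(i < n) \prod_(j < n) (x i j) ^ (C i j).

(* Minors of x of size 1, or of size 2 with consecutive rows i,i+1 and
   consecutive columns j,j+1. *)
Inductive cminor (n : nat) : Type :=
| Minor1 (i j : 'I_n)
| Minor2 (i j : nat) (hi : (i.+1 < n)%N) (hj : (j.+1 < n)%N).

Definition eval_minor (F : fieldType) (n : nat) (x : 'M[F]_n) (m : cminor n) : F :=
  match m with
  | Minor1 i j => x i j
  | Minor2 i j hi hj =>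
      x (Ordinal (ltnW hi)) (Ordinal (ltnW hj)) * x (Ordinal hi) (Ordinal hj)
      - x (Ordinal (ltnW hi)) (Ordinal hj) * x (Ordinal hi) (Ordinal (ltnW hj))
  end.

(* A polynomial in the minors with nonnegative (natural) coefficients:
   a list of terms (coefficient, list of minor factors). *)
Definition minor_poly (n : nat) := seq (nat * seq (cminor n)).

Definition no_const_term (n : nat) (M : minor_poly n) : bool :=
  all (fun t => ~~ nilp t.2) M.

Definition eval_mpoly (F : fieldType) (n : nat) (x : 'M[F]_n) (M : minor_poly n) : F :=
  \sum_(t <- M) (t.1)%:R * \prod_(m <- t.2) eval_minor x m.

From HB Require Import structures.
From mathcomp Require Import all_boot all_order all_algebra.
From mathcomp Require Import ring zify.
Import Order.TTheory GRing.Theory Num.Theory.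
Local Open Scope ring_scope.
Set Implicit Arguments. Unset Strict Implicit.

(* Border the corner sum matrix of A by zeros to get a height function h_A on
   the grid {0..n}^2.  For an ASM, h_A increases by 0 or 1 at each step along
   rows and columns, and A <= B in ASM order means h_B <= h_A with equality on
   the border of the grid.  While h_B < h_A somewhere, a point maximising
   4 (h_A - h_B) + 2 h_A - (k + l) among such points is an inner corner of h_A;
   lowering h_A by one there adds [[-1, 1], [1, -1]] to a 2x2 block of A in
   consecutive rows and columns, keeps the increments in {0, 1}, and changes x^A
   by a Laurent monomial with exponents >= -1 times a consecutive 2x2 minor.
   Chaining these steps down to B and factoring out the entrywise minimum of the
   monomial exponents gives the result, the leftover monomials being products
   of 1x1 minors. *)

Lemma big_ord_ltS (V : nmodType) n (F : 'I_n -> V) k (hk : (k < n)%N) :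
  \sum_(p < n | (p < k.+1)%N) F p = \sum_(p < n | (p < k)%N) F p + F (Ordinal hk).
Proof.
rewrite (bigD1 (Ordinal hk)) //= addrC; congr (_ + _).
by apply: eq_bigl => p; rewrite ltnS leq_eqVlt -val_eqE /=; case: ltngtP.
Qed.

Lemma big_ord_lt_ge (V : nmodType) n (F : 'I_n -> V) k : (n <= k)%N ->
  \sum_(p < n | (p < k)%N) F p = \sum_(p < n) F p.
Proof. by move=> le_nk; apply: eq_bigl => p; apply: leq_trans le_nk. Qed.

Lemma sum_ord_eq_nat (R : pzSemiRingType) m b : (b < m)%N ->
  \sum_(l < m) ((l : nat) == b)%:R = 1 :> R.
Proof.
move=> lt_bm; rewrite (bigD1 (Ordinal lt_bm)) //= eqxx big1 ?addr0 // => l.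
by rewrite -val_eqE => /negbTE ->.
Qed.

Lemma natr_ltn_subS (R : pzRingType) i k :
  ((i < k)%N%:R - (i.+1 < k)%N%:R : R) = (k == i.+1)%:R.
Proof.
rewrite eq_sym -[(i < k)%N]/(i.+1 <= k)%N leq_eqVlt.
by case: eqP => [->|_]; rewrite ?ltnn ?subr0 //= subrr.
Qed.

Section CornerSums.
Variables (R : comPzRingType) (n : nat).
Implicit Types A B : 'M[R]_n.

(* The corner sum matrix bordered by a zero row and column; [k, l] range over [0..n]. *)
Definition csum A (k l : nat) : R :=
  \sum_(p < n | (p < k)%N) \sum_(q < n | (q < l)%N) A p q.

Lemma csum0l A l : csum A 0 l = 0.
Proof. by rewrite /csum big_pred0. Qed.

Lemma csum0r A k : csum A k 0 = 0.
Proof. by rewrite /csum big1 // => p _; rewrite big_pred0. Qed.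

Lemma csumSl A k l (hk : (k < n)%N) :
  csum A k.+1 l - csum A k l = \sum_(q < n | (q < l)%N) A (Ordinal hk) q.
Proof. by rewrite /csum big_ord_ltS addrC addKr. Qed.

Lemma csumSr A k l (hl : (l < n)%N) :
  csum A k l.+1 - csum A k l = \sum_(p < n | (p < k)%N) A p (Ordinal hl).
Proof.
by rewrite /csum -sumrB; apply: eq_bigr => p _; rewrite big_ord_ltS addrC addKr.
Qed.

Lemma csum_entry A (p q : 'I_n) :
  A p q = (csum A p.+1 q.+1 - csum A p.+1 q) - (csum A p q.+1 - csum A p q).
Proof.
rewrite !csumSr (big_ord_ltS _ (ltn_ord p)) addrC addKr.
by congr (A _ _); apply: val_inj.
Qed.

Lemma csumD A B k l : csum (A + B) k l = csum A k l + csum B k l.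
Proof.
rewrite /csum -big_split; apply: eq_bigr => p _; rewrite -big_split.
by apply: eq_bigr => q _; rewrite mxE.
Qed.

Lemma csumN A k l : csum (- A) k l = - csum A k l.
Proof.
rewrite /csum -sumrN; apply: eq_bigr => p _; rewrite -sumrN.
by apply: eq_bigr => q _; rewrite mxE.
Qed.

Lemma csum_delta (a b : 'I_n) k l :
  csum (delta_mx a b) k l = (a < k)%N%:R * (b < l)%N%:R.
Proof.
rewrite /csum big_mkcond (bigD1 a) //= [X in _ + X]big1 ?addr0; last first.
  move=> p /negbTE ne_pa; case: ifP => // _.
  by rewrite big1 // => q _; rewrite mxE ne_pa.
rewrite big_mkcond (bigD1 b) //= [X in _ + X]big1 ?addr0; last first.
  by move=> q /negbTE ne_qb; rewrite mxE ne_qb andbF; case: ifP.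
by rewrite mxE !eqxx; case: (a < k)%N; case: (b < l)%N; rewrite ?mul1r ?mul0r.
Qed.

Definition lower_at (h : nat -> nat -> R) k0 l0 k l : R :=
  h k l - ((k == k0) && (l == l0))%:R.

Section Flip.
Variables (i j : nat) (hi : (i.+1 < n)%N) (hj : (j.+1 < n)%N).
Local Notation i0 := (Ordinal (ltnW hi)).
Local Notation i1 := (Ordinal hi).
Local Notation j0 := (Ordinal (ltnW hj)).
Local Notation j1 := (Ordinal hj).

Definition flip_mx : 'M[R]_n :=
  delta_mx i0 j1 + delta_mx i1 j0 - delta_mx i0 j0 - delta_mx i1 j1.

(* The entrywise minimum of [A] and [A + flip_mx]. *)
Definition flip_base A : 'M[R]_n := A - delta_mx i0 j0 - delta_mx i1 j1.

Lemma flip_baseK A : flip_base A + delta_mx i0 j0 + delta_mx i1 j1 = A.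
Proof. by rewrite /flip_base addrAC !subrK. Qed.

Lemma addr_flip A : A + flip_mx = flip_base A + delta_mx i0 j1 + delta_mx i1 j0.
Proof.
apply/matrixP => p q; rewrite /flip_base /flip_mx !mxE.
by ring.
Qed.

Lemma csum_flip A k l : csum (A + flip_mx) k l = lower_at (csum A) i.+1 j.+1 k l.
Proof.
rewrite /lower_at !csumD !csumN !csum_delta /= -mulnb natrM -!natr_ltn_subS.
by ring.
Qed.
End Flip.

Lemma csum_bottom A l : csum A n l = \sum_(q < n | (q < l)%N) \sum_(p < n) A p q.
Proof. by rewrite /csum big_ord_lt_ge // exchange_big. Qed.

Lemma csum_right A k : csum A k n = \sum_(p < n | (p < k)%N) \sum_(q < n) A p q.
Proof. by apply: eq_bigr => p _; rewrite big_ord_lt_ge. Qed.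

Lemma csum_inj A B :
  (forall k l, (k <= n)%N -> (l <= n)%N -> csum A k l = csum B k l) -> A = B.
Proof.
move=> eqAB; apply/matrixP => p q.
by rewrite csum_entry [RHS]csum_entry !eqAB // ltnW.
Qed.
End CornerSums.
Arguments flip_mx {R n i j}.

Section HeightFunctions.
Variable n : nat.
Implicit Types a b h : nat -> nat -> int.

Definition unit_increments h :=
  (forall k l, (k <= n)%N -> (l < n)%N -> 0 <= h k l.+1 - h k l <= 1) /\
  (forall k l, (k < n)%N -> (l <= n)%N -> 0 <= h k.+1 l - h k l <= 1).

Definition inner_corner h i j :=
  [/\ h i.+1 j.+1 = h i.+1 j + 1, h i.+1 j.+2 = h i.+1 j.+1,
      h i.+1 j.+1 = h i j.+1 + 1 & h i.+2 j.+1 = h i.+1 j.+1].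

Lemma unit_increments_lower h h' i j :
  unit_increments h -> inner_corner h i j -> h' =2 lower_at h i.+1 j.+1 ->
  unit_increments h'.
Proof.
move=> [incr_l incr_k] [cl cr cu cd] eh'; split=> k l hk hl; rewrite !eh' /lower_at.
- have := incr_l k l hk hl.
  case: (eqVneq k i.+1) => [->|nk]; last lia.
  case: (eqVneq l j) => [->|nl]; first lia.
  by case: (eqVneq l j.+1) => [->|nl']; lia.
- have := incr_k k l hk hl.
  case: (eqVneq l j.+1) => [->|nl]; last lia.
  case: (eqVneq k i) => [->|nk]; first lia.
  by case: (eqVneq k i.+1) => [->|nk']; lia.
Qed.

Definition agree_on_border a b :=
  forall k l, (k <= n)%N -> (l <= n)%N -> [|| k == 0, l == 0, k == n | l == n]%N ->
  a k l = b k l.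

Definition dominates a b :=
  [/\ unit_increments a, unit_increments b, agree_on_border a b &
      forall k l, (k <= n)%N -> (l <= n)%N -> b k l <= a k l].

Lemma dominates_lower a a' b i j :
  (i.+1 < n)%N -> (j.+1 < n)%N -> dominates a b -> inner_corner a i j ->
  b i.+1 j.+1 < a i.+1 j.+1 -> a' =2 lower_at a i.+1 j.+1 -> dominates a' b.
Proof.
move=> hi hj [incr_a incr_b border le_ba] corner lt_ba ea'; split => //.
- exact: unit_increments_lower corner ea'.
- by move=> k l hk hl on_border; rewrite ea' /lower_at border //; lia.
- move=> k l hk hl; rewrite ea' /lower_at; have := le_ba k l hk hl.
  case: (eqVneq k i.+1) => [->|nk]; last lia.
  by case: (eqVneq l j.+1) => [->|nl]; lia.
Qed.

Lemma exists_inner_corner a b :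
  dominates a b -> (exists k l, [/\ (k <= n)%N, (l <= n)%N & b k l < a k l]) ->
  exists i j, [/\ (i.+1 < n)%N, (j.+1 < n)%N, inner_corner a i j &
                  b i.+1 j.+1 < a i.+1 j.+1].
Proof.
case=> [[al ak] [bl bk] border _] [k0 [l0 [hk0 hl0 lt0]]].
(* Stepping left or up from a point where [b < a] keeps [b < a] and raises
   [key] unless [a] drops by one; stepping right or down does so unless [a]
   stays flat.  Hence a maximiser of [key] is an inner corner. *)
pose P (c : 'I_n.+1 * 'I_n.+1) := b c.1 c.2 < a c.1 c.2.
pose key (c : 'I_n.+1 * 'I_n.+1) :=
  4 * (a c.1 c.2 - b c.1 c.2) + 2 * a c.1 c.2 - (c.1 + c.2)%N%:Z.
have P0 : P (Ordinal (hk0 : (k0 < n.+1)%N), Ordinal (hl0 : (l0 < n.+1)%N)) by [].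
case: (@arg_maxP _ int _ _ P key P0) => [[[k hk] [l hl]]]; rewrite /P /= => lt_ba max_kl.
have inside : ~~ [|| k == 0, l == 0, k == n | l == n]%N.
  by apply: contraTN lt_ba => /border -> //; rewrite ltxx.
have [i ek] : exists i, k = i.+1 by exists k.-1; lia.
have [j el] : exists j, l = j.+1 by exists l.-1; lia.
subst k l; have hi : (i.+1 < n)%N by lia.
have hj : (j.+1 < n)%N by lia.
have left := max_kl (Ordinal hk, Ordinal (ltnW hl)).
have right := max_kl (Ordinal hk, Ordinal (hj : (j.+2 < n.+1)%N)).
have up := max_kl (Ordinal (ltnW hk), Ordinal hl).
have down := max_kl (Ordinal (hi : (i.+2 < n.+1)%N), Ordinal hl).
rewrite /P /key /= in left right up down.
move: (al i.+1 j (ltnW hi) (ltnW hj)) (bl i.+1 j (ltnW hi) (ltnW hj)).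
move: (al i.+1 j.+1 (ltnW hi) hj) (bl i.+1 j.+1 (ltnW hi) hj).
move: (ak i j.+1 (ltnW hi) (ltnW hj)) (bk i j.+1 (ltnW hi) (ltnW hj)).
move: (ak i.+1 j.+1 hi (ltnW hj)) (bk i.+1 j.+1 hi (ltnW hj)).
by exists i, j; split => //; split; lia.
Qed.

Definition grid_sum h : int := \sum_(k < n.+1) \sum_(l < n.+1) h k l.

Lemma grid_sum_lower h h' k0 l0 : (k0 <= n)%N -> (l0 <= n)%N ->
  h' =2 lower_at h k0 l0 -> grid_sum h' = grid_sum h - 1.
Proof.
move=> hk0 hl0 eh'; rewrite /grid_sum.
transitivity (\sum_(k < n.+1) (\sum_(l < n.+1) h k l - ((k : nat) == k0)%:R)).
  apply: eq_bigr => k _.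
  rewrite (eq_bigr (fun l : 'I_n.+1 =>
    h k l - ((k : nat) == k0)%:R * ((l : nat) == l0)%:R)).
    by rewrite sumrB -mulr_sumr sum_ord_eq_nat ?mulr1.
  by move=> l _; rewrite eh' /lower_at -mulnb natrM.
by rewrite sumrB sum_ord_eq_nat.
Qed.

Lemma dominates_grid_sum a b : dominates a b -> grid_sum b <= grid_sum a.
Proof.
case=> _ _ _ le_ba; apply: ler_sum => k _; apply: ler_sum => l _.
exact: le_ba (ltn_ord k) (ltn_ord l).
Qed.
End HeightFunctions.

Section AsmHeights.
Variable n : nat.
Implicit Types A B : 'M[int]_n.

Lemma corner_sumE A (i j : 'I_n) : corner_sum A i j = csum A i.+1 j.+1.
Proof.
rewrite /corner_sum /csum; apply: eq_big => [p|p _]; first by rewrite ltnS.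
by apply: eq_bigl => q; rewrite ltnS.
Qed.

Lemma unit_increments_entry A p q : unit_increments n (csum A) -> -1 <= A p q.
Proof.
case=> incr_l _; rewrite csum_entry.
have := incr_l p.+1 q (ltn_ord p) (ltn_ord q).
have := incr_l p q (ltnW (ltn_ord p)) (ltn_ord q).
lia.
Qed.

Lemma asm_unit_increments A : is_asm A -> unit_increments n (csum A).
Proof.
have in01 (s : int) : s \in [:: 0; 1] -> 0 <= s <= 1.
  by rewrite !inE => /orP[] /eqP->.
case=> [_ [row_part [col_part _]]]; split.
- move=> [|k] l hk hl; rewrite csumSr; first by rewrite big_pred0.
  have := col_part (Ordinal hl) (Ordinal (hk : (k < n)%N)) => /in01.
  by rewrite (eq_bigl (fun p : 'I_n => (p <= k)%N)) // => p; rewrite ltnS.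
- move=> k [|l] hk hl; rewrite csumSl; first by rewrite big_pred0.
  have := row_part (Ordinal hk) (Ordinal (hl : (l < n)%N)) => /in01.
  by rewrite (eq_bigl (fun q : 'I_n => (q <= l)%N)) // => q; rewrite ltnS.
Qed.

Lemma asm_agree_on_border A B : is_asm A -> is_asm B ->
  agree_on_border n (csum A) (csum B).
Proof.
move=> [_ [_ [_ [rowsA colsA]]]] [_ [_ [_ [rowsB colsB]]]] k l _ _.
case/or4P => /eqP->; rewrite ?csum0l ?csum0r //.
- by rewrite !csum_bottom; apply: eq_bigr => q _; rewrite colsA colsB.
- by rewrite !csum_right; apply: eq_bigr => p _; rewrite rowsA rowsB.
Qed.

Lemma asm_le_dominates A B : is_asm A -> is_asm B -> asm_le A B ->
  dominates n (csum A) (csum B).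
Proof.
move=> asmA asmB leAB; split; [exact: asm_unit_increments asmA|
  exact: asm_unit_increments asmB| exact: asm_agree_on_border asmA asmB|].
move=> [|k] [|l] hk hl; rewrite ?csum0l ?csum0r //.
have := leAB (Ordinal (hk : (k < n)%N)) (Ordinal (hl : (l < n)%N)).
by rewrite !corner_sumE.
Qed.
End AsmHeights.

Definition monomial_minors n (E : 'M[int]_n) : seq (cminor n) :=
  flatten [seq flatten [seq nseq `|E i j|%N (Minor1 i j) | j <- enum 'I_n]
          | i <- enum 'I_n].

Definition scale_mpoly n (E : 'M[int]_n) (M : minor_poly n) : minor_poly n :=
  [seq (t.1, monomial_minors E ++ t.2) | t <- M].

Lemma no_const_term_cat n (M1 M2 : minor_poly n) :
  no_const_term (M1 ++ M2) = no_const_term M1 && no_const_term M2.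
Proof. exact: all_cat. Qed.

Lemma no_const_term_scale n (E : 'M[int]_n) M :
  no_const_term M -> no_const_term (scale_mpoly E M).
Proof.
rewrite /no_const_term all_map; apply: sub_all => t /=.
by rewrite /nilp size_cat addn_eq0 negb_and orbC => ->.
Qed.

Section MonomialAlgebra.
Variables (F : fieldType) (n : nat) (x : 'M[F]_n).

Lemma xmon_delta (a b : 'I_n) : xmon x (delta_mx a b) = x a b.
Proof.
rewrite /xmon (bigD1 a) //= (bigD1 b) //= !mxE !eqxx expr1z.
rewrite big1 => [|j /negbTE ne_jb]; last by rewrite mxE ne_jb andbF expr0z.
rewrite mulr1 big1 ?mulr1 // => i /negbTE ne_ia.
by apply: big1 => j _; rewrite mxE ne_ia expr0z.
Qed.

Lemma prod_monomial_minors (E : 'M[int]_n) : (forall i j, 0 <= E i j) ->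
  \prod_(m <- monomial_minors E) eval_minor x m = xmon x E.
Proof.
move=> E_ge0; rewrite /monomial_minors big_flatten big_map /xmon big_enum /=.
apply: eq_bigr => i _; rewrite big_flatten big_map big_enum /=.
by apply: eq_bigr => j _; rewrite big_nseq iter_mulr_1 /= exprnP gez0_abs.
Qed.

Lemma eval_mpoly_cat (M1 M2 : minor_poly n) :
  eval_mpoly x (M1 ++ M2) = eval_mpoly x M1 + eval_mpoly x M2.
Proof. exact: big_cat. Qed.

Lemma eval_scale_mpoly (E : 'M[int]_n) M : (forall i j, 0 <= E i j) ->
  eval_mpoly x (scale_mpoly E M) = xmon x E * eval_mpoly x M.
Proof.
move=> E_ge0; rewrite /eval_mpoly big_map mulr_sumr; apply: eq_bigr => t _.
by rewrite big_cat prod_monomial_minors // mulrCA.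
Qed.

Hypothesis x_neq0 : forall i j, x i j != 0.

Lemma xmonD (C D : 'M[int]_n) : xmon x (C + D) = xmon x C * xmon x D.
Proof.
rewrite /xmon -big_split; apply: eq_bigr => i _; rewrite -big_split.
by apply: eq_bigr => j _; rewrite mxE expfzDr.
Qed.

Lemma xmon_flip i j (hi : (i.+1 < n)%N) (hj : (j.+1 < n)%N) (A : 'M[int]_n) :
  xmon x A - xmon x (A + flip_mx hi hj) =
  xmon x (flip_base hi hj A) * eval_minor x (Minor2 hi hj).
Proof.
rewrite -{1}(flip_baseK hi hj A) addr_flip !xmonD !xmon_delta /=.
by ring.
Qed.
End MonomialAlgebra.

Section Factorizations.
Variable n : nat.
Implicit Types A B C : 'M[int]_n.

Definition minor_factorization A B :=
  exists (c : 'M[int]_n) (M : minor_poly n),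
    (forall i j, -1 <= c i j) /\ no_const_term M /\
    forall (F : fieldType) (x : 'M[F]_n), (forall i j, x i j != 0) ->
      xmon x A - xmon x B = xmon x c * eval_mpoly x M.

Lemma minor_factorization_refl A : minor_factorization A A.
Proof.
exists 0, [::]; split; first by move=> i j; rewrite mxE.
by split=> // F x _; rewrite subrr /eval_mpoly big_nil mulr0.
Qed.

Lemma minor_factorization_trans A B C :
  minor_factorization A B -> minor_factorization B C -> minor_factorization A C.
Proof.
move=> [c1 [M1 [c1_ge [M1_nc eAB]]]] [c2 [M2 [c2_ge [M2_nc eBC]]]].
(* Factor out the entrywise minimum [c] so both cofactors are monomials. *)
pose c := \matrix_(i, j) Num.min (c1 i j) (c2 i j).
have c1c_ge0 i j : 0 <= (c1 - c) i j by rewrite !mxE subr_ge0 ge_min lexx.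
have c2c_ge0 i j : 0 <= (c2 - c) i j by rewrite !mxE subr_ge0 ge_min lexx orbT.
exists c, (scale_mpoly (c1 - c) M1 ++ scale_mpoly (c2 - c) M2); split.
  by move=> i j; rewrite mxE le_min c1_ge c2_ge.
split; first by rewrite no_const_term_cat !no_const_term_scale.
move=> F x x_neq0; rewrite -[LHS](subrKA (xmon x B)) eAB // eBC //.
rewrite eval_mpoly_cat !eval_scale_mpoly // mulrDr !mulrA -!xmonD //.
by rewrite !(addrC c) !subrK.
Qed.

Lemma minor_factorization_flip i j (hi : (i.+1 < n)%N) (hj : (j.+1 < n)%N) A :
  (forall p q, -1 <= A p q) -> (forall p q, -1 <= (A + flip_mx hi hj) p q) ->
  minor_factorization A (A + flip_mx hi hj).
Proof.
move=> A_ge A'_ge; exists (flip_base hi hj A), [:: (1%N, [:: Minor2 hi hj])]; split.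
  move=> p q; move: (A_ge p q) (A'_ge p q).
  rewrite /flip_base /flip_mx !mxE -!val_eqE /=.
  lia.
split=> // F x x_neq0; rewrite xmon_flip //.
by rewrite /eval_mpoly big_seq1 big_seq1 mul1r.
Qed.
End Factorizations.

Lemma dominates_minor_factorization n (A B : 'M[int]_n) :
  dominates n (csum A) (csum B) -> minor_factorization A B.
Proof.
have [N] := ubnP `|grid_sum n (csum A) - grid_sum n (csum B)|.
elim: N A => // N IH A lt_measure dom.
have [/existsP[[k l] /= lt_kl] | /existsPn eq_kl] :=
  boolP [exists c : 'I_n.+1 * 'I_n.+1, csum B c.1 c.2 < csum A c.1 c.2].
- have [|i [j [hi hj corner lt_ij]]] := exists_inner_corner dom.
    by exists k, l; split; [exact: ltn_ord k | exact: ltn_ord l |].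
  have lowered := csum_flip hi hj A.
  have dom' := dominates_lower hi hj dom corner lt_ij lowered.
  apply: minor_factorization_trans (IH _ _ dom').
    have [incr_A _ _ _] := dom; have [incr_A' _ _ _] := dom'.
    by apply: minor_factorization_flip => p q; apply: unit_increments_entry.
  have := dominates_grid_sum dom'.
  rewrite (grid_sum_lower _ _ lowered) ?(ltnW hi) ?(ltnW hj) //.
  lia.
- suff -> : A = B by apply: minor_factorization_refl.
  have [_ _ _ le_BA] := dom.
  apply: csum_inj => k l hk hl; apply/eqP; rewrite eq_le le_BA // andbT leNgt.
  exact: (eq_kl (Ordinal (hk : (k < n.+1)%N), Ordinal (hl : (l < n.+1)%N))).
Qed.

Theorem mainTheorem14 (n : nat) (A B : 'M[int]_n) :
  is_asm A -> is_asm B -> asm_lt A B ->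
  exists (c : 'M[int]_n) (M : minor_poly n),
    (forall i j, -1 <= c i j) /\ no_const_term M /\
    forall (F : fieldType) (x : 'M[F]_n), (forall i j, x i j != 0) ->
      xmon x A - xmon x B = xmon x c * eval_mpoly x M.
Proof.
move=> asmA asmB [leAB _].
exact: dominates_minor_factorization (asm_le_dominates asmA asmB leAB).
Qed.
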